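(* Consider a market with $n$ goods, supplies $w_1,\dots,w_n>0$ and demand functions $x_i:(0,\infty)^n\to(0,\infty)$ satisfying (fixed spending) $\sum_i p_ix_i(p)=M$ for all $p$, for a constant $M>0$, and (WGS) for all $j\ne i$, $x_j(p)$ is non-decreasing in $p_i$. Let $\phi_j(q)=q_j|x_j(q)-w_j|$. Fix $p$ and $i$ with $x_i(p)\ne w_i$, and let $p'=(p_{-i},p_i')$ differ from $p$ only in coordinate $i$, where $p_i'>p_i$ if $x_i(p)>w_i$ and $p_i'<p_i$ if $x_i(p)<w_i$, and where the change is same-side: $x_i(p')\ge w_i$ if $x_i(p)>w_i$, and $x_i(p')\le w_i$ if $x_i(p)<w_i$. Then \[ \phi_i(p)-\phi_i(p')\ \ge\ w_i|p_i'-p_i|+\sum_{j\ne i}\big|\phi_j(p)-\phi_j(p')\big|. \] In particular $\sum_j\phi_j(p)-\sum_j\phi_j(p')\ge w_i|p_i'-p_i|$.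
   Context: $(p_{-i},p_i')$ denotes the price vector $p$ with its $i$-th entry replaced by $p_i'$. *)

(* the statement is purely order-algebraic, stated over an
   arbitrary real field R (covers the reals). *)
From HB Require Import structures.
From mathcomp Require Import all_boot all_order all_algebra.
Set Implicit Arguments. Unset Strict Implicit. Unset Printing Implicit Defensive.
Import Order.TTheory GRing.Theory Num.Theory.
Local Open Scope ring_scope.

Definition posvec (R : realFieldType) (n : nat) (p : 'I_n -> R) : Prop :=
  forall k, 0 < p k.

Definition upd (R : realFieldType) (n : nat) (p : 'I_n -> R) (i : 'I_n) (a : R)
  : 'I_n -> R := fun j => if j == i then a else p j.

Definition phi (R : realFieldType) (n : nat) (x : ('I_n -> R) -> 'I_n -> R)
  (w : 'I_n -> R) (j : 'I_n) (q : 'I_n -> R) : R :=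
  q j * `|x q j - w j|.

(* Let sigma = +1 if p_i goes up and -1 if it goes down.  By WGS every other
   demand moves in direction sigma, and by fixed spending the extra spending
   on the other goods, sum_{j<>i} p_j (x_j(p') - x_j(p)), equals the saving
   d = p_i x_i(p) - p'_i x_i(p') on good i.  Because the change is same-side,
   phi_i drops by exactly w_i |p'_i - p_i| + sigma d.  Each |phi_j(p) -
   phi_j(p')| is at most p_j |x_j(p') - x_j(p)|, and since all these changes
   have sign sigma they add up to sigma d. *)

From HB Require Import structures.
From mathcomp Require Import all_boot all_order all_algebra ring lra.
From Stdlib Require Import FunctionalExtensionality.
Set Implicit Arguments.
Unset Strict Implicit.
Unset Printing Implicit Defensive.

Import Order.TTheory GRing.Theory Num.Theory.
Local Open Scope ring_scope.

Section Signed.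

Variable R : realFieldType.
Implicit Types (s t c d u v w : R).

Lemma normr_signed s t : `|s| = 1 -> 0 <= s * t -> `|t| = s * t.
Proof. by move=> s1 st0; rewrite -(ger0_norm st0) normrM s1 mul1r. Qed.

Lemma weighted_dist_sub_signed s c d u v w :
  `|s| = 1 -> 0 <= s * (u - w) -> 0 <= s * (v - w) -> 0 <= s * (d - c) ->
  c * `|u - w| - d * `|v - w| = w * `|d - c| + s * (c * u - d * v).
Proof.
move=> s1 su sv sc.
rewrite (normr_signed s1 su) (normr_signed s1 sv) (normr_signed s1 sc).
by ring.
Qed.

Lemma dist_weighted_dist_le c u v w :
  0 <= c -> `|c * `|u - w| - c * `|v - w| | <= c * `|u - v|.
Proof.
move=> c0; rewrite -mulrBr normrM ger0_norm // ler_wpM2l //.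
by have := ler_dist_dist (u - w) (v - w); rewrite opprB addrA subrK.
Qed.

End Signed.

Lemma sum_offdiag_balance (R : realFieldType) (n : nat) (i : 'I_n)
    (p q u v : 'I_n -> R) :
  (forall j, j != i -> q j = p j) ->
  \sum_k p k * u k = \sum_k q k * v k ->
  \sum_(j < n | j != i) p j * (v j - u j) = p i * u i - q i * v i.
Proof.
move=> qp; rewrite (bigD1 i) //= [in RHS](bigD1 i) //= => bal.
have eq_off : \sum_(j < n | j != i) q j * v j = \sum_(j < n | j != i) p j * v j.
  by apply: eq_bigr => j /qp ->.
under eq_bigr do rewrite mulrBr.
by rewrite sumrB; move: bal; rewrite eq_off; lra.
Qed.

Lemma sum_drop_ge (R : realFieldType) (n : nat) (i : 'I_n) (F G : 'I_n -> R) c :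
  c + \sum_(j < n | j != i) `|F j - G j| <= F i - G i ->
  c <= \sum_j F j - \sum_j G j.
Proof.
move=> own; rewrite (bigD1 i) //= [X in _ - X](bigD1 i) //= opprD addrACA -sumrB.
apply: le_trans (lerD own (_ : - (\sum_(j < n | j != i) `|F j - G j|) <= _)).
  by rewrite addrK.
by rewrite -sumrN; apply: ler_sum => j _; exact: lerNnormlW.
Qed.

Section Upd.

Variables (R : realFieldType) (n : nat) (p : 'I_n -> R) (i : 'I_n).

Lemma upd_id : upd p i (p i) = p.
Proof. by apply: functional_extensionality => k; rewrite /upd; case: eqP => // ->. Qed.

Lemma upd_eq a : upd p i a i = a.
Proof. by rewrite /upd eqxx. Qed.

Lemma upd_neq a j : j != i -> upd p i a j = p j.
Proof. by rewrite /upd => /negbTE ->. Qed.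

Lemma posvec_upd a : posvec p -> 0 < a -> posvec (upd p i a).
Proof. by move=> hp ha k; rewrite /upd; case: (k == i). Qed.

End Upd.

Section Market.

Variables (R : realFieldType) (n : nat) (w : 'I_n -> R) (M : R).
Variable x : ('I_n -> R) -> 'I_n -> R.
Hypothesis hspend : forall q, posvec q -> \sum_(k < n) q k * x q k = M.
Hypothesis hWGS : forall (q : 'I_n -> R) (i j : 'I_n), posvec q -> j != i ->
  forall a b : R, 0 < a -> a <= b -> x (upd q i a) j <= x (upd q i b) j.

Variables (p : 'I_n -> R) (i : 'I_n) (a : R).
Hypotheses (hp : posvec p) (ha : 0 < a).
Let q := upd p i a.

Lemma spending_shift :
  \sum_(j < n | j != i) p j * (x q j - x p j) = p i * x p i - a * x q i.
Proof.
rewrite -[in a * _](upd_eq p i a); apply: sum_offdiag_balance; first exact: upd_neq.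
by rewrite !hspend //; exact: posvec_upd.
Qed.

Lemma WGS_signed s : `|s| = 1 -> 0 <= s * (a - p i) ->
  forall j, j != i -> 0 <= s * (x q j - x p j).
Proof.
move=> s1 sa j ji.
case: (ltrgt0P s) s1 sa => [_ ->|_ /(canRL opprK) ->|_ /eqP]; last first.
- by rewrite eq_sym oner_eq0.
- rewrite !mulN1r !oppr_ge0 !subr_le0 => /(hWGS hp ji ha).
  by rewrite upd_id.
- rewrite !mul1r !subr_ge0 => /(hWGS hp ji (hp i)).
  by rewrite upd_id.
Qed.

Lemma phi_others_le s : `|s| = 1 -> 0 <= s * (a - p i) ->
  \sum_(j < n | j != i) `|phi x w j p - phi x w j q|
    <= s * (p i * x p i - a * x q i).
Proof.
move=> s1 sa; rewrite -spending_shift mulr_sumr; apply: ler_sum => j ji.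
rewrite /phi [q j]upd_neq // mulrCA -(normr_signed s1 (WGS_signed s1 sa ji)) distrC.
exact/dist_weighted_dist_le/ltW.
Qed.

End Market.

Theorem mainTheorem6 (R : realFieldType) (n : nat)
  (w : 'I_n -> R) (M : R) (x : ('I_n -> R) -> 'I_n -> R)
  (hw : forall j, 0 < w j) (hM : 0 < M)
  (hxpos : forall q, posvec q -> forall j, 0 < x q j)
  (hspend : forall q, posvec q -> \sum_(k < n) q k * x q k = M)
  (hWGS : forall (q : 'I_n -> R) (i j : 'I_n), posvec q -> j != i ->
     forall a b : R, 0 < a -> a <= b -> x (upd q i a) j <= x (upd q i b) j)
  (p : 'I_n -> R) (i : 'I_n) (a : R)
  (hp : posvec p) (ha : 0 < a) (hneq : x p i != w i)
  (hup : w i < x p i -> p i < a /\ w i <= x (upd p i a) i)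
  (hdown : x p i < w i -> a < p i /\ x (upd p i a) i <= w i) :
  phi x w i p - phi x w i (upd p i a) >=
    w i * `|a - p i| + \sum_(j < n | j != i) `|phi x w j p - phi x w j (upd p i a)|
  /\
  \sum_(j < n) phi x w j p - \sum_(j < n) phi x w j (upd p i a) >= w i * `|a - p i|.
Proof.
have [s s1 [sxp sxq sa]] : exists2 s : R, `|s| = 1 &
    [/\ 0 <= s * (x p i - w i), 0 <= s * (x (upd p i a) i - w i)
      & 0 <= s * (a - p i)].
  case: (ltgtP (x p i) (w i)) hneq => // xpi _.
  - have [api xqi] := hdown xpi.
    exists (-1); first by rewrite normrN normr1.
    by split; rewrite mulN1r oppr_ge0 subr_le0 //; exact: ltW.
  - have [api xqi] := hup xpi.
    exists 1; first by rewrite normr1.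
    by split; rewrite mul1r subr_ge0 //; exact: ltW.
have own : phi x w i p - phi x w i (upd p i a)
    = w i * `|a - p i| + s * (p i * x p i - a * x (upd p i a) i).
  by rewrite /phi upd_eq (weighted_dist_sub_signed s1 sxp sxq sa).
have first : w i * `|a - p i|
    + \sum_(j < n | j != i) `|phi x w j p - phi x w j (upd p i a)|
    <= phi x w i p - phi x w i (upd p i a).
  by rewrite own lerD2l (phi_others_le w hspend hWGS hp ha s1 sa).
by split=> //; exact: sum_drop_ge first.
Qed.
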